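(* Let $A$ be a finite nonempty set of positive real numbers, let $P=A\times A\subset\mathbb{R}^2$, and let $m<m'$ be two consecutive elements of the ratio set $A/A=\{b/a: a,b\in A\}$ (i.e. no element of $A/A$ lies strictly between them). Let $n=|\{(x,y)\in P: y/x=m\}|$ and $n'=|\{(x,y)\in P: y/x=m'\}|$. Then the open interval $(m,m')$ contains at least $n+n'-1$ distinct elements of $\frac{A+A}{A+A}$.
   Context: $\frac{A+A}{A+A}:=\left\{\frac{a+b}{c+d}: a,b,c,d\in A\right\}$. *)

From HB Require Import structures.
From mathcomp Require Import all_boot all_order all_algebra.
Set Implicit Arguments. Unset Strict Implicit. Unset Printing Implicit Defensive.
Import Order.TTheory GRing.Theory Num.Theory.
Local Open Scope ring_scope.

Definition in_ratio_set (R : realFieldType) (A : seq R) (r : R) : Prop :=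
  exists a b, a \in A /\ b \in A /\ r = b / a.

Definition in_sum_ratio_set (R : realFieldType) (A : seq R) (r : R) : Prop :=
  exists a b c d, [/\ a \in A, b \in A, c \in A & d \in A] /\ r = (a + b) / (c + d).

(* |{(x,y) in A x A : y/x = m}|, for A given as a duplicate-free sequence *)
Definition line_count (R : realFieldType) (A : seq R) (m : R) : nat :=
  count (fun p : R * R => p.2 / p.1 == m) [seq (x, y) | x <- A, y <- A].

From HB Require Import structures.
From mathcomp Require Import all_boot all_order all_algebra.
From mathcomp Require Import ring.

Set Implicit Arguments.
Unset Strict Implicit.
Unset Printing Implicit Defensive.
Import Order.TTheory GRing.Theory Num.Theory.
Local Open Scope ring_scope.

(* Let X (resp. U) be the set of x with (x, m x) in P (resp. (x, m' x) in P),
   so that n = |X| and n' = |U|.  For x in X and u in U the number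
   (m x + m' u) / (x + u) lies in (A+A)/(A+A), strictly between m and m', and
   is a strictly increasing function of u / x.  With x0 = min X and u0 = min U,
   the ratios u0 / x (x in X) and u / x0 (u in U, u <> u0) are pairwise
   distinct, since u0 / x <= u0 / x0 < u / x0; this gives n + n' - 1 elements. *)

Lemma ex_min_seq d (T : orderType d) (s : seq T) (z : T) :
  z \in s -> exists2 x, x \in s & {in s, forall y, (x <= y)%O}.
Proof.
case E : (sort <=%O s) (sort_sorted (@le_total _ T) s) => [|x t] srt zs.
  by rewrite -(mem_sort <=%O) E in zs.
exists x => [|y]; first by rewrite -(mem_sort <=%O) E mem_head.
rewrite -(mem_sort <=%O) E in_cons => /predU1P[-> //|]; apply/allP.
exact: order_path_min le_trans srt.
Qed.

Section Ratios.

Variable R : realFieldType.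
Implicit Types (A X U : seq R) (r t x u : R).

Lemma count_ratio_allpairs (B C : seq R) r :
  uniq C -> {in B, forall x, x != 0} ->
  count (fun p : R * R => p.2 / p.1 == r) [seq (x, y) | x <- B, y <- C]
  = count (fun x => r * x \in C) B.
Proof.
move=> uC; elim: B => [|x B IH] nzB //=.
rewrite count_cat IH => [|z zB]; last by apply: nzB; rewrite in_cons zB orbT.
congr (_ + _)%N; rewrite count_map -(count_uniq_mem (r * x) uC).
have nzx : x != 0 by apply: nzB; rewrite mem_head.
by apply: eq_count => y /=; apply/eqP/eqP => [<-|->]; rewrite ?mulfK ?divfK.
Qed.

Lemma line_countE A r :
  uniq A -> {in A, forall x, x != 0} ->
  line_count A r = size [seq x <- A | r * x \in A].
Proof. by move=> uA nzA; rewrite size_filter /line_count count_ratio_allpairs. Qed.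

Definition mediant (m m' : R) t := (m + m' * t) / (1 + t).

Lemma mediant_ratio (m m' : R) x u :
  0 < x -> 0 < u -> mediant m m' (u / x) = (m * x + m' * u) / (x + u).
Proof.
move=> x_gt0 u_gt0; rewrite /mediant; field.
by rewrite !lt0r_neq0 ?addr_gt0 ?divr_gt0 //.
Qed.

Lemma mediant_bounds (m m' : R) t :
  m < m' -> 0 < t -> m < mediant m m' t < m'.
Proof.
move=> lt_mm' t_gt0; have t1_gt0 : 0 < 1 + t by rewrite addr_gt0.
rewrite /mediant ltr_pdivlMr // ltr_pdivrMr //.
by rewrite !mulrDr !mulr1 ltrD2l ltrD2r !ltr_pM2r ?lt_mm'.
Qed.

Lemma mediant_inj (m m' : R) :
  m != m' -> {in [pred t | 0 <= t] &, injective (mediant m m')}.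
Proof.
move=> neq_mm' t t' t_ge0 t'_ge0 /eqP.
have onet_neq0 (s : R) : 0 <= s -> 1 + s != 0 by move=> ?; rewrite lt0r_neq0 ?ltr_pwDl.
rewrite /mediant eqr_div ?onet_neq0 // => /eqP eq_cross.
have : (m' - m) * (t - t') = 0.
  transitivity ((m + m' * t) * (1 + t') - (m + m' * t') * (1 + t)); first by ring.
  by rewrite eq_cross subrr.
by move/eqP; rewrite mulf_eq0 !subr_eq0 eq_sym (negPf neq_mm') => /eqP.
Qed.

Definition hook_ratios X U x0 u0 :=
  [seq u0 / x | x <- X] ++ [seq u / x0 | u <- rem u0 U].

Lemma size_hook_ratios X U x0 u0 :
  u0 \in U -> size (hook_ratios X U x0 u0) = (size X + size U).-1.
Proof.
move=> u0U; rewrite size_cat !size_map size_rem //.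
have : (0 < size U)%N by case: (U) u0U.
by case: (size U) => // k _; rewrite addnS.
Qed.

Lemma mem_hook_ratios X U x0 u0 r :
  x0 \in X -> u0 \in U -> r \in hook_ratios X U x0 u0 ->
  exists x u, [/\ x \in X, u \in U & r = u / x].
Proof.
move=> x0X u0U; rewrite mem_cat => /orP[] /mapP[y yS ->].
  by exists y, u0.
by exists x0, y; split=> //; apply: mem_rem yS.
Qed.

Lemma hook_ratios_uniq X U x0 u0 :
  uniq X -> uniq U -> {in X, forall x, 0 < x} -> {in U, forall u, 0 < u} ->
  x0 \in X -> u0 \in U -> {in X, forall x, x0 <= x} -> {in U, forall u, u0 <= u} ->
  uniq (hook_ratios X U x0 u0).
Proof.
move=> uX uU posX posU x0X u0U x0_min u0_min.
have [x0_gt0 u0_gt0] := (posX _ x0X, posU _ u0U).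
rewrite cat_uniq; apply/and3P; split.
- by rewrite map_inj_in_uniq // => x y _ _ /(mulfI (lt0r_neq0 u0_gt0))/invr_inj.
- apply/hasPn => _ /mapP[u + ->]; rewrite mem_rem_uniq // => /andP[neq_u u_in_U].
  apply/mapP => -[x xX eq_ratio].
  have lt_u0u : u0 < u by rewrite lt_neqAle eq_sym neq_u u0_min.
  have : u0 / x < u / x0.
    apply: (@le_lt_trans _ _ (u0 / x0)); last by rewrite ltr_pM2r ?invr_gt0.
    by rewrite ler_pM2l // lef_pV2 ?posrE ?posX ?x0_min.
  by rewrite eq_ratio ltxx.
- rewrite map_inj_in_uniq ?rem_uniq // => u v _ _.
  by apply: (mulIf (invr_neq0 (lt0r_neq0 x0_gt0))).
Qed.

End Ratios.

Theorem mainTheorem2 (R : realFieldType) (A : seq R) (m m' : R) :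
  uniq A -> A != [::] -> (forall a, a \in A -> 0 < a) ->
  in_ratio_set A m -> in_ratio_set A m' -> m < m' ->
  (forall r, in_ratio_set A r -> ~ (m < r /\ r < m')) ->
  exists S : seq R,
    [/\ uniq S,
        (line_count A m + line_count A m' - 1 <= size S)%N
      & forall s, s \in S -> m < s /\ s < m' /\ in_sum_ratio_set A s].
Proof.
move=> uA _ posA [a [b [aA [bA def_m]]]] [a' [b' [a'A [b'A def_m']]]] lt_mm' _.
have nzA : {in A, forall x, x != 0} by move=> x /posA/lt0r_neq0.
set X := [seq x <- A | m * x \in A]; set U := [seq u <- A | m' * u \in A].
have memX x : x \in X -> x \in A /\ m * x \in A by rewrite mem_filter => /andP[].
have memU u : u \in U -> u \in A /\ m' * u \in A by rewrite mem_filter => /andP[].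
have aX : a \in X by rewrite mem_filter aA def_m divfK ?bA ?nzA.
have a'U : a' \in U by rewrite mem_filter a'A def_m' divfK ?b'A ?nzA.
have [x0 x0X x0_min] := ex_min_seq aX.
have [u0 u0U u0_min] := ex_min_seq a'U.
have ratio_gt0 r : r \in hook_ratios X U x0 u0 -> 0 < r.
  case/(mem_hook_ratios x0X u0U) => x [u [/memX[/posA ? _] /memU[/posA ? _] ->]].
  by rewrite divr_gt0.
exists [seq mediant m m' r | r <- hook_ratios X U x0 u0]; split.
- rewrite map_inj_in_uniq.
    by rewrite hook_ratios_uniq ?filter_uniq // => [x /memX[/posA] | u /memU[/posA]].
  apply: sub_in2 (mediant_inj (negbT (lt_eqF lt_mm'))) => r /ratio_gt0/ltW.
  by rewrite inE.
- by rewrite size_map size_hook_ratios // !line_countE // subn1.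
- move=> _ /mapP[r rH ->].
  have /andP[gt_m lt_m'] := mediant_bounds lt_mm' (ratio_gt0 r rH).
  do 2!split=> //.
  have [x [u [/memX[x_in_A mx_in_A] /memU[u_in_A mu_in_A] ->]]] :=
    mem_hook_ratios x0X u0U rH.
  by rewrite mediant_ratio ?posA //; exists (m * x), (m' * u), x, u.
Qed.
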